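(* Let $D'$ be a Falk subcomplex of type $s_3$ in the Artin complex $D(B_3)$. Then the orthoscheme metric on $D'$ is $\mathrm{CAT}(0)$.
   Context: $A(B_3)=\langle s_1,s_2,s_3 \mid s_1s_2s_1=s_2s_1s_2,\ s_1s_3=s_3s_1,\ s_2s_3s_2s_3=s_3s_2s_3s_2\rangle$ and $W(B_3)$ is its quotient by $s_i^2=1$. For $i=1,2,3$, $\hat s_i$ denotes the standard parabolic subgroup generated by the other two generators (in $A(B_3)$ or $W(B_3)$). The Artin complex $D(B_3)$ (resp. Coxeter complex $C(B_3)$) has vertices the cosets $g\hat s_i$ in $A(B_3)$ (resp. $W(B_3)$), of type $\hat s_i$, and a set of vertices spans a simplex iff the cosets have nonempty common intersection; $C(B_3)$ is a triangulation of the 2-sphere on which $W(B_3)$ acts by reflections. Let $\rho:D(B_3)\to C(B_3)$ be the simplicial map induced by the quotient $A(B_3)\to W(B_3)$. A Falk subcomplex of type $s_3$: take a reflection $r\in W(B_3)$ conjugate to $s_3$, let $H$ be the subcomplex of $C(B_3)$ fixed pointwise by $r$, choose one of the two components of $C(B_3)\setminus H$, let $U$ be the largest closed subcomplex of $C(B_3)$ contained in that component, and take a lift of $U$ along $\rho$ (a subcomplex of $D(B_3)$ mapped isomorphically onto $U$ by $\rho$). The orthoscheme metric on $D'$ is the piecewise Euclidean length metric in which each 2-simplex is a Euclidean isosceles right triangle with the right angle at its vertex of type $\hat s_2$ (angles $\pi/4$ at the vertices of types $\hat s_1$ and $\hat s_3$). *)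

From Stdlib Require Import Reals List Relations Bool.
From Coquelicot Require Import Rbar Lub.
Import ListNotations.
Open Scope R_scope.

Inductive gen := s1 | s2 | s3.
(* a letter (a, false) is the generator a, (a, true) is its inverse *)
Definition letter := (gen * bool)%type.
Definition word := list letter.
Definition lt (a : gen) : letter := (a, false).
Definition winv (g : word) : word := rev (map (fun l => (fst l, negb (snd l))) g).

Inductive geq (rels : list (word * word)) : word -> word -> Prop :=
| geq_refl w : geq rels w w
| geq_sym u v : geq rels u v -> geq rels v u
| geq_trans u v w : geq rels u v -> geq rels v w -> geq rels u w
| geq_free u v a b : geq rels (u ++ (a, b) :: (a, negb b) :: v) (u ++ v)
| geq_rel u v l r : In (l, r) rels -> geq rels (u ++ l ++ v) (u ++ r ++ v).

Definition relsA : list (word * word) :=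
  [ ([lt s1; lt s2; lt s1], [lt s2; lt s1; lt s2]);
    ([lt s1; lt s3], [lt s3; lt s1]);
    ([lt s2; lt s3; lt s2; lt s3], [lt s3; lt s2; lt s3; lt s2]) ].
Definition relsW : list (word * word) :=
  relsA ++ [ ([lt s1; lt s1], []); ([lt s2; lt s2], []); ([lt s3; lt s3], []) ].

Definition eqA := geq relsA.
Definition eqW := geq relsW.

(* the coset g \hat s_i (as a set of words, closed under the group equality) *)
Definition coset (rels : list (word * word)) (i : gen) (g : word) : word -> Prop :=
  fun w => exists h, (forall l, In l h -> fst l <> i) /\ geq rels w (g ++ h).

(* a vertex: its type i (meaning type \hat s_i) and the coset itself *)
Definition vertex := (gen * (word -> Prop))%type.

Definition isVertex rels (v : vertex) : Prop := exists g, snd v = coset rels (fst v) g.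

Definition simplex rels (s : list vertex) : Prop :=
  s <> [] /\ (forall v, In v s -> isVertex rels v) /\
  exists w, forall v, In v s -> snd v w.

Definition simplexA := simplex relsA.
Definition simplexW := simplex relsW.

Definition rhoV (v : vertex) : vertex :=
  (fst v, fun w => exists u, snd v u /\ eqW w u).

Definition reflS3 (r : word) : Prop := exists g, eqW r (g ++ [lt s3] ++ winv g).

Definition actV (r : word) (v : vertex) : vertex :=
  (fst v, fun w => exists u, snd v u /\ eqW w (r ++ u)).

Definition fixedV (r : word) (v : vertex) : Prop := actV r v = v.

Definition adjNF (r : word) (u v : vertex) : Prop :=
  isVertex relsW u /\ isVertex relsW v /\ ~ fixedV r u /\ ~ fixedV r v /\
  simplexW [u; v].

(* U: the largest closed subcomplex of C(B_3) contained in the component of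
   C(B_3) \ H containing the (non-fixed) vertex v0 *)
Definition Ucomp (r : word) (v0 : vertex) (s : list vertex) : Prop :=
  simplexW s /\
  forall v, In v s -> ~ fixedV r v /\ clos_refl_trans vertex (adjNF r) v0 v.

Definition isLift (K : list vertex -> Prop) (U : list vertex -> Prop) : Prop :=
  (forall s, K s -> simplexA s) /\
  (forall s s', K s -> s' <> [] -> incl s' s -> K s') /\
  (forall s, K s -> U (map rhoV s)) /\
  (forall t, U t -> exists s, K s /\ forall w, In w t <-> In w (map rhoV s)) /\
  (forall v v' s s', K s -> K s' -> In v s -> In v' s' -> rhoV v = rhoV v' -> v = v').

Definition pt := vertex -> R.

(* position of the vertex of type \hat s_i in the model isosceles right
   triangle, right angle at the vertex of type \hat s_2 *)
Definition pos (v : vertex) : R * R :=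
  match fst v with s1 => (0, 0) | s2 => (1, 0) | s3 => (1, 1) end.

Definition eucl (p q : R * R) : R :=
  sqrt ((fst p - fst q) ^ 2 + (snd p - snd q) ^ 2).

Fixpoint sumL (s : list vertex) (f : vertex -> R) : R :=
  match s with [] => 0 | v :: s' => f v + sumL s' f end.

Definition image (s : list vertex) (x : pt) : R * R :=
  (sumL s (fun v => x v * fst (pos v)), sumL s (fun v => x v * snd (pos v))).

(* points of the geometric realization |K| (barycentric coordinates) *)
Definition inSimplex (s : list vertex) (x : pt) : Prop :=
  (forall v, x v <> 0 -> In v s) /\ (forall v, 0 <= x v) /\ sumL s x = 1.

Definition isPt (K : list vertex -> Prop) (x : pt) : Prop :=
  exists s, K s /\ NoDup s /\ inSimplex s x.

Definition pieceLen (K : list vertex -> Prop) (x y : pt) (d : R) : Prop :=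
  exists s, K s /\ NoDup s /\ inSimplex s x /\ inSimplex s y /\
    d = eucl (image s x) (image s y).

Fixpoint strLen (K : list vertex -> Prop) (x : pt) (ps : list pt) (y : pt) (d : R)
  : Prop :=
  match ps with
  | [] => pieceLen K x y d
  | p :: ps' => exists d1 d2, pieceLen K x p d1 /\ strLen K p ps' y d2 /\ d = d1 + d2
  end.

Definition dist (K : list vertex -> Prop) (x y : pt) : Rbar :=
  Glb_Rbar (fun d => exists ps, Forall (isPt K) ps /\ strLen K x ps y d).

Definition geodesic (K : list vertex -> Prop) (g : R -> pt) (x y : pt) (l : R) : Prop :=
  0 <= l /\ g 0 = x /\ g l = y /\
  forall s t, 0 <= s <= l -> 0 <= t <= l ->
    isPt K (g s) /\ dist K (g s) (g t) = Finite (Rabs (s - t)).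

Definition cmp (a b : R * R) (l s : R) : R * R :=
  (fst a + (s / l) * (fst b - fst a), snd a + (s / l) * (snd b - snd a)).

Definition CAT0 (K : list vertex -> Prop) : Prop :=
  (forall x y, isPt K x -> isPt K y -> exists g l, geodesic K g x y l) /\
  forall (x y z : pt) (g1 g2 g3 : R -> pt) (l1 l2 l3 : R) (xb yb zb : R * R),
    geodesic K g1 x y l1 -> geodesic K g2 y z l2 -> geodesic K g3 z x l3 ->
    eucl xb yb = l1 -> eucl yb zb = l2 -> eucl zb xb = l3 ->
    let sides := [(g1, l1, xb, yb); (g2, l2, yb, zb); (g3, l3, zb, xb)] in
    forall e1 e2 s t, In e1 sides -> In e2 sides ->
      match e1, e2 with (h1, m1, a1, b1), (h2, m2, a2, b2) =>
        0 <= s <= m1 -> 0 <= t <= m2 ->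
        Rbar_le (dist K (h1 s) (h2 t)) (Finite (eucl (cmp a1 b1 m1 s) (cmp a2 b2 m2 t)))
      end.

From Pilot Require Import Defs.
From Stdlib Require Import Reals List ZArith Lia Lra Bool Relations Permutation.
From Stdlib Require Import FunctionalExtensionality PropExtensionality Classical
  ClassicalEpsilon IndefiniteDescription.
From Coquelicot Require Import Rbar Lub.
Import ListNotations.

(* W(B_3) acts faithfully on Z^3 by signed permutations (s1, s2 swap coordinates, s3
   negates the last one), and the stabiliser of p_1 = (1,0,0), p_2 = (1,1,0) or
   p_3 = (1,1,1) is the parabolic subgroup \hat s_i.  So the vertex g \hat s_i of
   C(B_3) is the point g p_i, and C(B_3) is the barycentric subdivision of the
   boundary of the cube [-1,1]^3.  A reflection conjugate to s_3 negates one
   coordinate x_k, H is the great circle x_k = 0, and U is the subdivided face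
   x_k = e (e = +-1): a square cut into eight isosceles right triangles with right
   angles at the edge midpoints.  A lift of U along rho is a simplicial copy of this
   square, on which the orthoscheme metric is the Euclidean metric of [-1,1]^2; as a
   convex subset of the plane, it is CAT(0). *)

(** * The signed permutation representation of W(B_3) *)

Section Presentations.
Variable rels : list (word * word).

Lemma geq_context u v x y : geq rels u v -> geq rels (x ++ u ++ y) (x ++ v ++ y).
Proof.
  induction 1.
  - apply geq_refl.
  - now apply geq_sym.
  - eapply geq_trans; eassumption.
  - rewrite <- !app_assoc, !(app_assoc x u); apply geq_free.
  - rewrite <- !app_assoc, !(app_assoc x u); now apply geq_rel.
Qed.

Lemma geq_app_l x u v : geq rels u v -> geq rels (x ++ u) (x ++ v).
Proof. intro H; pose proof (geq_context u v x [] H) as H'; now rewrite !app_nil_r in H'. Qed.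

Lemma geq_app_winv u w : geq rels (u ++ winv u ++ w) w.
Proof.
  revert w; induction u as [|[a b] u IH]; intro w; [apply geq_refl|].
  change (winv ((a, b) :: u)) with (winv u ++ [(a, negb b)]).
  rewrite <- app_assoc; cbn.
  eapply geq_trans; [apply (geq_app_l [(a, b)]), IH|].
  apply (geq_free rels [] w).
Qed.

End Presentations.

Lemma eqW_letter a b w : eqW ((a, b) :: w) (lt a :: w).
Proof.
  destruct b; [|apply geq_refl].
  eapply geq_trans.
  - apply geq_sym, (geq_rel relsW [(a, true)] w [lt a; lt a] []).
    destruct a; cbv; tauto.
  - apply (geq_free relsW [] (lt a :: w) a true).
Qed.

Definition Z3 := (Z * Z * Z)%type.

Section SignedPermutations.
Variables (A : Type) (neg : A -> A).

Definition gen_act (a : gen) (v : A * A * A) : A * A * A :=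
  let '(x, y, z) := v in
  match a with s1 => (y, x, z) | s2 => (x, z, y) | s3 => (x, y, neg z) end.

Fixpoint word_act (w : word) (v : A * A * A) : A * A * A :=
  match w with [] => v | l :: w' => gen_act (fst l) (word_act w' v) end.

Lemma word_act_app u v x : word_act (u ++ v) x = word_act u (word_act v x).
Proof. induction u; cbn; congruence. Qed.

End SignedPermutations.

Definition map3 {A B} (f : A -> B) (v : A * A * A) : B * B * B :=
  let '(x, y, z) := v in (f x, f y, f z).

Lemma word_act_map {A B} (negA : A -> A) (negB : B -> B) (f : A -> B) :
  (forall x, f (negA x) = negB (f x)) ->
  forall w v, word_act B negB w (map3 f v) = map3 f (word_act A negA w v).
Proof.
  intros Hf w v; induction w as [|l w IH]; cbn; [reflexivity|].
  rewrite IH; destruct (word_act A negA w v) as [[x y] z].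
  destruct (fst l); cbn; now rewrite ?Hf.
Qed.

Definition act : word -> Z3 -> Z3 := word_act Z Z.opp.

(* A signed coordinate index (n, b) stands for the linear form (-1)^b x_n, so
   the action on the symbolic point [sperm_id] records the group element. *)
Definition sindex := (nat * bool)%type.
Definition sperm := (sindex * sindex * sindex)%type.
Definition sneg (x : sindex) : sindex := (fst x, negb (snd x)).
Definition sperm_id : sperm := ((0, false), (1, false), (2, false))%nat.
Definition elt (w : word) : sperm := word_act sindex sneg w sperm_id.

Definition coord {A} (k : nat) (v : A * A * A) : A :=
  let '(a, b, c) := v in match k with 0%nat => a | 1%nat => b | _ => c end.

Lemma coord_map3 {A B} (f : A -> B) k v : coord k (map3 f v) = f (coord k v).
Proof. destruct v as [[a b] c]; destruct k as [|[|k]]; reflexivity. Qed.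

Definition eval_sindex (v : Z3) (x : sindex) : Z :=
  if snd x then (- coord (fst x) v)%Z else coord (fst x) v.

Lemma act_elt w v : act w v = map3 (eval_sindex v) (elt w).
Proof.
  replace v with (map3 (eval_sindex v) sperm_id) at 1 by (destruct v as [[a b] c]; reflexivity).
  apply word_act_map.
  intros [n []]; cbn; lia.
Qed.

Lemma act_app u v x : act (u ++ v) x = act u (act v x).
Proof. apply word_act_app. Qed.

Lemma gen_act_involutive a v : gen_act Z Z.opp a (gen_act Z Z.opp a v) = v.
Proof. destruct v as [[x y] z]; destruct a; cbn; f_equal; lia. Qed.

Lemma eqW_act u v : eqW u v -> forall x, act u x = act v x.
Proof.
  induction 1 as [w|u v _ IH|u v w _ IH1 _ IH2|u v a b|u v l r Hlr]; intro x.
  - reflexivity.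
  - now rewrite IH.
  - now rewrite IH1.
  - rewrite !act_app; cbn; now rewrite gen_act_involutive.
  - rewrite !act_app; f_equal; rewrite !act_elt; f_equal.
    repeat destruct Hlr as [Hlr|Hlr]; try injection Hlr as <- <-; try reflexivity; contradiction.
Qed.

Lemma act_winv_l u q : act (winv u) (act u q) = q.
Proof.
  induction u as [|l u IH]; [reflexivity|].
  change (winv (l :: u)) with (winv u ++ [(fst l, negb (snd l))]).
  rewrite act_app; cbn; rewrite gen_act_involutive; exact IH.
Qed.

Lemma act_winv_r u q : act u (act (winv u) q) = q.
Proof.
  revert q; induction u as [|l u IH]; intro q; [reflexivity|].
  change (winv (l :: u)) with (winv u ++ [(fst l, negb (snd l))]).
  rewrite act_app; cbn; fold act; rewrite IH; apply gen_act_involutive.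
Qed.

(** * The word problem in W(B_3) *)

Definition gens := [s1; s2; s3].

Lemma in_gens a : In a gens.
Proof. destruct a; cbn; tauto. Qed.

Definition gen_eqb (a b : gen) : bool :=
  match a, b with s1, s1 | s2, s2 | s3, s3 => true | _, _ => false end.

Lemma gen_eqb_spec a b : gen_eqb a b = true <-> a = b.
Proof. destruct a, b; cbn; split; congruence. Qed.

Definition word_eq_dec (u v : word) : {u = v} + {u <> v}.
Proof. repeat decide equality. Defined.

Definition sperm_eq_dec (x y : sperm) : {x = y} + {x <> y}.
Proof. repeat decide equality. Defined.

Definition sperm_eqb (x y : sperm) : bool := if sperm_eq_dec x y then true else false.

Definition add_new (ws : list word) (w : word) : list word :=
  if existsb (fun u => sperm_eqb (elt u) (elt w)) ws then ws else ws ++ [w].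

Definition grow (ws : list word) : list word :=
  fold_left add_new (flat_map (fun w => map (fun a => lt a :: w) gens) ws) ws.

(* Breadth-first search in the Cayley graph: one shortest word for each of the
   48 elements. *)
Definition nf_words : list word := Nat.iter 9 grow [[]].

Definition pick (ws : list word) (x : sperm) : word :=
  match find (fun w => sperm_eqb (elt w) x) ws with Some w => w | None => [] end.

Definition nf : sperm -> word := pick nf_words.

Definition moves : list (word * word) := relsW ++ map (fun lr => (snd lr, fst lr)) relsW.

Definition rewrite_at (w : word) (pos : nat) (lr : word * word) : option word :=
  let '(a, b) := lr in
  if word_eq_dec (firstn (length a) (skipn pos w)) a
  then Some (firstn pos w ++ b ++ skipn (length a) (skipn pos w)) else None.

Definition rewrites (w : word) : list word :=
  flat_map (fun pos => flat_map (fun lr =>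
    match rewrite_at w pos lr with
    | Some w' => if length w' <=? length w then [w'] else []
    | None => [] end) moves) (seq 0 (length w)).

Fixpoint saturate (n : nat) (ws : list word) : list word :=
  match n with
  | 0 => ws
  | S n => saturate n (nodup word_eq_dec (ws ++ flat_map rewrites ws))
  end.

Lemma moves_eqW l r : In (l, r) moves -> eqW l r.
Proof.
  assert (Hrel : forall l r, In (l, r) relsW -> eqW l r).
  { intros l' r' H; pose proof (geq_rel relsW [] [] l' r' H) as H'; now rewrite !app_nil_r in H'. }
  unfold moves; rewrite in_app_iff, in_map_iff.
  intros [H|([l' r'] & E & H)]; [now apply Hrel|].
  injection E as <- <-; now apply geq_sym, Hrel.
Qed.

Lemma rewrite_at_eqW w pos l r w' :
  In (l, r) moves -> rewrite_at w pos (l, r) = Some w' -> eqW w w'.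
Proof.
  intros Hlr; cbn.
  destruct (word_eq_dec _ l) as [Hl|]; [|discriminate].
  intro E; injection E as <-.
  rewrite <- (firstn_skipn pos w) at 1.
  rewrite <- (firstn_skipn (length l) (skipn pos w)), Hl at 1.
  now apply geq_context, moves_eqW.
Qed.

Lemma rewrites_eqW w w' : In w' (rewrites w) -> eqW w w'.
Proof.
  unfold rewrites; rewrite in_flat_map.
  intros (pos & _ & H); rewrite in_flat_map in H; destruct H as ([l r] & Hlr & H).
  destruct (rewrite_at w pos (l, r)) as [w''|] eqn:E; [|contradiction].
  destruct (length w'' <=? length w); [|contradiction].
  destruct H as [<-|[]]; now apply (rewrite_at_eqW w pos l r).
Qed.

Lemma saturate_eqW w0 n ws : Forall (eqW w0) ws -> Forall (eqW w0) (saturate n ws).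
Proof.
  revert ws; induction n as [|n IH]; intros ws H; [exact H|]; apply IH.
  rewrite Forall_forall in H |- *; intros w Hw.
  rewrite nodup_In, in_app_iff, in_flat_map in Hw.
  destruct Hw as [Hw|(u & Hu & Hw)]; [now apply H|].
  eapply geq_trans; [apply H, Hu|]; now apply rewrites_eqW.
Qed.

Definition nf_complete_check : bool :=
  forallb (fun w => forallb (fun a =>
    existsb (fun u => sperm_eqb (elt u) (elt (lt a :: w))) nf_words) gens) nf_words.

(* By Tits' solution of the word problem, braid moves and cancellations, none of
   which increases the length, lead from any word to any reduced word of the
   same element. *)
Definition nf_rewrite_check : bool :=
  forallb (fun w => forallb (fun a =>
    existsb (fun u => if word_eq_dec u (nf (elt (lt a :: w))) then true else false)
      (saturate 8 [lt a :: w])) gens) nf_words.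

Lemma nf_checks : nf_complete_check = true /\ nf_rewrite_check = true.
Proof. split; vm_compute; reflexivity. Qed.

(* Keeps conversion from unfolding the computed table. *)
Opaque nf_words.

Lemma sperm_eqb_spec x y : sperm_eqb x y = true <-> x = y.
Proof. unfold sperm_eqb; destruct (sperm_eq_dec x y); split; congruence. Qed.

Lemma pick_spec ws x : (exists u, In u ws /\ elt u = x) -> In (pick ws x) ws /\ elt (pick ws x) = x.
Proof.
  intros (u & Hu & Hx); unfold pick.
  destruct (find (fun w => sperm_eqb (elt w) x) ws) as [w|] eqn:E.
  - apply find_some in E; now rewrite sperm_eqb_spec in E.
  - apply (find_none _ _ E) in Hu.
    now rewrite (proj2 (sperm_eqb_spec _ _) Hx) in Hu.
Qed.

Lemma elt_cons l w : elt (l :: w) = gen_act sindex sneg (fst l) (elt w).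
Proof. reflexivity. Qed.

Lemma elt_nf_words w : exists u, In u nf_words /\ elt u = elt w.
Proof.
  induction w as [|l w (u & Hu & He)].
  { exists []; split; [vm_compute; left; reflexivity | reflexivity]. }
  pose proof (proj1 nf_checks) as C; unfold nf_complete_check in C.
  rewrite forallb_forall in C; specialize (C u Hu).
  rewrite forallb_forall in C; specialize (C (fst l) (in_gens _)).
  apply existsb_exists in C; destruct C as (u' & Hu' & E).
  exists u'; split; [exact Hu'|].
  rewrite sperm_eqb_spec in E; rewrite E, !elt_cons, He; reflexivity.
Qed.

Lemma nf_elt w : In (nf (elt w)) nf_words /\ elt (nf (elt w)) = elt w.
Proof. apply pick_spec, elt_nf_words. Qed.

Lemma eqW_cons_nf w a : In w nf_words -> eqW (lt a :: w) (nf (elt (lt a :: w))).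
Proof.
  intro Hw; pose proof (proj2 nf_checks) as C; unfold nf_rewrite_check in C.
  rewrite forallb_forall in C; specialize (C w Hw).
  rewrite forallb_forall in C; specialize (C a (in_gens a)).
  apply existsb_exists in C; destruct C as (u & Hu & E).
  destruct (word_eq_dec u (nf (elt (lt a :: w)))) as [Eu|]; [|discriminate].
  assert (H : Forall (eqW (lt a :: w)) [lt a :: w]) by (constructor; [apply geq_refl|constructor]).
  apply (saturate_eqW _ 8) in H; rewrite Forall_forall in H.
  rewrite <- Eu; exact (H u Hu).
Qed.

Lemma eqW_nf w : eqW w (nf (elt w)).
Proof.
  induction w as [|[a b] w IH]; [apply geq_refl|].
  destruct (nf_elt w) as [Hin He].
  eapply geq_trans; [apply eqW_letter|].
  eapply geq_trans; [exact (geq_app_l _ [lt a] _ _ IH)|].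
  assert (E : elt (((a, b) : letter) :: w) = elt (lt a :: nf (elt w)))
    by (rewrite !elt_cons, He; reflexivity).
  rewrite E; exact (eqW_cons_nf _ a Hin).
Qed.

(** * Vertices of C(B_3) as points of Z^3 *)

Local Open Scope Z_scope.

Definition base_pt (i : gen) : Z3 :=
  match i with s1 => (1, 0, 0) | s2 => (1, 1, 0) | s3 => (1, 1, 1) end.

Definition avoids (i : gen) (h : word) : Prop := forall l, In l h -> fst l <> i.

Lemma act_avoids i h : avoids i h -> act h (base_pt i) = base_pt i.
Proof.
  induction h as [|l h IH]; intro H; [reflexivity|].
  change (act (l :: h) (base_pt i)) with (gen_act Z Z.opp (fst l) (act h (base_pt i))).
  rewrite IH by (intros l' Hl'; apply H; now right).
  assert (Hl : fst l <> i) by (apply H; now left).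
  destruct (fst l), i; cbn; congruence.
Qed.

Lemma act_nf_words g : exists u, In u nf_words /\ forall x, act g x = act u x.
Proof.
  destruct (nf_elt g) as [Hin He].
  exists (nf (elt g)); split; [exact Hin|]; intro x; rewrite !act_elt, He; reflexivity.
Qed.

Definition Z3_eqb (x y : Z3) : bool :=
  let '(a, b, c) := x in let '(a', b', c') := y in (a =? a') && (b =? b') && (c =? c').

Lemma Z3_eqb_spec x y : Z3_eqb x y = true <-> x = y.
Proof.
  destruct x as [[a b] c], y as [[a' b'] c']; cbn; rewrite !andb_true_iff, !Z.eqb_eq.
  split; [intros [[-> ->] ->]; reflexivity | intro E; now injection E].
Qed.

(* The stabiliser of [base_pt i] is the parabolic subgroup generated by the
   other two generators: its reduced words avoid [i]. *)
Definition stabiliser_check : bool :=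
  forallb (fun u => forallb (fun i =>
    if Z3_eqb (act u (base_pt i)) (base_pt i)
    then forallb (fun l => negb (gen_eqb (fst l) i)) u else true) gens) nf_words.

Lemma stabiliser_check_true : stabiliser_check = true.
Proof. vm_compute; reflexivity. Qed.

Lemma stabiliser_avoids i g :
  act g (base_pt i) = base_pt i -> exists h, avoids i h /\ eqW g h.
Proof.
  intro Hg; destruct (nf_elt g) as [Hin He].
  exists (nf (elt g)); split; [|apply eqW_nf].
  assert (Hu : act (nf (elt g)) (base_pt i) = base_pt i)
    by (rewrite act_elt, He, <- act_elt; exact Hg).
  pose proof stabiliser_check_true as C; unfold stabiliser_check in C.
  rewrite forallb_forall in C; specialize (C _ Hin); clear Hin.
  rewrite forallb_forall in C; specialize (C i (in_gens i)).
  rewrite (proj2 (Z3_eqb_spec _ _) Hu), forallb_forall in C.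
  intros l Hl E; specialize (C l Hl); rewrite E in C.
  assert (Hii : gen_eqb i i = true) by (destruct i; reflexivity).
  rewrite Hii in C; discriminate C.
Qed.

Lemma coset_W i g : coset relsW i g = fun w => act w (base_pt i) = act g (base_pt i).
Proof.
  apply functional_extensionality; intro w; apply propositional_extensionality; split.
  - intros (h & Hh & Hw).
    now rewrite (eqW_act _ _ Hw), act_app, act_avoids.
  - intro H.
    destruct (stabiliser_avoids i (winv g ++ w)) as (h & Hh & E).
    { now rewrite act_app, H, act_winv_l. }
    exists h; split; [exact Hh|].
    eapply geq_trans; [apply geq_sym, (geq_app_winv _ g w)|].
    now apply geq_app_l.
Qed.

(* The vertex g \hat s_i of C(B_3), recorded by the point g . base_pt i. *)
Definition pt_vertex (i : gen) (q : Z3) : vertex := (i, fun w => act w (base_pt i) = q).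

Lemma isVertex_W v :
  isVertex relsW v -> exists g, v = pt_vertex (fst v) (act g (base_pt (fst v))).
Proof.
  intros [g Hg]; exists g; destruct v as [i S]; cbn in *.
  now rewrite Hg, coset_W.
Qed.

Lemma pt_vertex_isVertex i g : isVertex relsW (pt_vertex i (act g (base_pt i))).
Proof. exists g; cbn; now rewrite coset_W. Qed.

Lemma pt_vertex_inj i q i' g :
  pt_vertex i q = pt_vertex i' (act g (base_pt i')) -> i = i' /\ q = act g (base_pt i').
Proof.
  intro E; injection E as <- E.
  split; [reflexivity|].
  pose proof (f_equal (fun S => S g) E) as Eg; cbn in Eg.
  symmetry; rewrite Eg; reflexivity.
Qed.

Lemma actV_pt_vertex r i q : actV r (pt_vertex i q) = pt_vertex i (act r q).
Proof.
  unfold actV, pt_vertex; cbn; f_equal.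
  apply functional_extensionality; intro w; apply propositional_extensionality; split.
  - intros (u & Hu & Hw); now rewrite (eqW_act _ _ Hw), act_app, Hu.
  - intro H; exists (winv r ++ w); split.
    + now rewrite act_app, H, act_winv_l.
    + apply geq_sym, geq_app_winv.
Qed.

Definition flip (k : nat) (v : Z3) : Z3 :=
  let '(a, b, c) := v in
  match k with 0%nat => (- a, b, c) | 1%nat => (a, - b, c) | _ => (a, b, - c) end.

Definition sflip (k : nat) (x : sperm) : sperm :=
  let '(a, b, c) := x in
  match k with 0%nat => (sneg a, b, c) | 1%nat => (a, sneg b, c) | _ => (a, b, sneg c) end.

Definition reflection_check : bool :=
  forallb (fun u => existsb (fun k =>
    sperm_eqb (word_act sindex sneg u (gen_act sindex sneg s3 sperm_id)) (sflip k (elt u)))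
    [0; 1; 2]%nat) nf_words.

Lemma reflection_check_true : reflection_check = true.
Proof. vm_compute; reflexivity. Qed.

Lemma eval_sneg y x : eval_sindex y (sneg x) = - eval_sindex y x.
Proof. destruct x as [n []]; cbn; lia. Qed.

Lemma act_conj_s3 u k :
  word_act sindex sneg u (gen_act sindex sneg s3 sperm_id) = sflip k (elt u) ->
  forall y, act u (act [lt s3] y) = flip k (act u y).
Proof.
  intros Hu y.
  replace (act [lt s3] y) with (map3 (eval_sindex y) (gen_act sindex sneg s3 sperm_id))
    by (destruct y as [[a b] c]; reflexivity).
  unfold act; rewrite (word_act_map sneg Z.opp (eval_sindex y) (eval_sneg y)), Hu.
  fold act; rewrite act_elt.
  destruct (elt u) as [[a b] c]; destruct k as [|[|k]]; cbn; now rewrite eval_sneg.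
Qed.

Lemma reflS3_flip r : reflS3 r -> exists k, In k [0; 1; 2]%nat /\ forall x, act r x = flip k x.
Proof.
  intros [g Hg]; destruct (act_nf_words g) as (u & Hu & Eu).
  pose proof reflection_check_true as C; unfold reflection_check in C.
  rewrite forallb_forall in C; specialize (C u Hu); clear Hu.
  apply existsb_exists in C; destruct C as (k & Hk & Ck); rewrite sperm_eqb_spec in Ck.
  exists k; split; [exact Hk|]; intro x.
  rewrite (eqW_act _ _ Hg), !act_app, !Eu, (act_conj_s3 u k Ck).
  rewrite <- Eu, act_winv_r; reflexivity.
Qed.

Lemma coord_act g x k : coord k (act g x) = eval_sindex x (coord k (elt g)).
Proof. now rewrite act_elt, coord_map3. Qed.

Lemma coord_act_base_pt_mul_nonneg g i i' k :
  0 <= coord k (act g (base_pt i)) * coord k (act g (base_pt i')).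
Proof.
  rewrite !coord_act; destruct (coord k (elt g)) as [n b].
  assert (H : 0 <= coord n (base_pt i) * coord n (base_pt i'))
    by (destruct i, i', n as [|[|n]]; cbn; lia).
  destruct b; cbn; lia.
Qed.

Lemma flip_fixed k q : In k [0; 1; 2]%nat -> flip k q = q <-> coord k q = 0.
Proof.
  intro Hk; destruct q as [[a b] c].
  destruct Hk as [<-|[<-|[<-|[]]]]; cbn; split; intro H;
    solve [injection H; lia | rewrite H; reflexivity].
Qed.

Lemma fixedV_pt_vertex r k i g :
  In k [0; 1; 2]%nat -> (forall x, act r x = flip k x) ->
  fixedV r (pt_vertex i (act g (base_pt i))) <-> coord k (act g (base_pt i)) = 0.
Proof.
  intros Hk Hr; unfold fixedV; rewrite actV_pt_vertex, Hr, <- flip_fixed by exact Hk.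
  split; [intro E; now apply pt_vertex_inj in E | intro E; now rewrite E].
Qed.

Lemma simplex_incl rels t t' : simplex rels t -> t' <> [] -> incl t' t -> simplex rels t'.
Proof.
  intros (_ & Hv & w & Hw) Ht' Hincl.
  split; [exact Ht'|]; split; [intros v Hin; apply Hv, Hincl, Hin|].
  exists w; intros v Hin; apply Hw, Hincl, Hin.
Qed.

(** * The Falk subcomplex is a subdivided square *)

Definition slot := (Z * Z)%type.

Definition square_slots : list slot :=
  [(0, 0); (1, 0); (-1, 0); (0, 1); (0, -1); (1, 1); (1, -1); (-1, 1); (-1, -1)].

Definition slot_type (s : slot) : gen :=
  match s with (0, 0) => s1 | (0, _) | (_, 0) => s2 | _ => s3 end.

Definition tri := (slot * slot * slot)%type.

(* Each triangle is listed as (centre, edge midpoint, corner), i.e. in the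
   order of the types s1, s2, s3. *)
Definition square_triangles : list tri :=
  [((0, 0), (1, 0), (1, 1)); ((0, 0), (1, 0), (1, -1));
   ((0, 0), (-1, 0), (-1, 1)); ((0, 0), (-1, 0), (-1, -1));
   ((0, 0), (0, 1), (1, 1)); ((0, 0), (0, 1), (-1, 1));
   ((0, 0), (0, -1), (1, -1)); ((0, 0), (0, -1), (-1, -1))].

Definition tri_slots (j : tri) : list slot := let '(a, b, c) := j in [a; b; c].

Lemma tri_slots_square j s : In j square_triangles -> In s (tri_slots j) -> In s square_slots.
Proof.
  intros Hj Hs; repeat destruct Hj as [<-|Hj]; try contradiction;
    repeat destruct Hs as [<-|Hs]; try contradiction; cbn; tauto.
Qed.

Lemma square_slot_triangle s :
  In s square_slots ->
  exists j, In j square_triangles /\ In s (tri_slots j) /\ In (0, 0) (tri_slots j).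
Proof.
  intro Hs; repeat destruct Hs as [<-|Hs]; try contradiction;
    [ exists ((0, 0), (1, 0), (1, 1)) | exists ((0, 0), (1, 0), (1, 1))
    | exists ((0, 0), (-1, 0), (-1, 1)) | exists ((0, 0), (0, 1), (1, 1))
    | exists ((0, 0), (0, -1), (1, -1)) | exists ((0, 0), (1, 0), (1, 1))
    | exists ((0, 0), (1, 0), (1, -1)) | exists ((0, 0), (-1, 0), (-1, 1))
    | exists ((0, 0), (-1, 0), (-1, -1)) ]; cbn; tauto.
Qed.

Definition slot_eqb (s t : slot) : bool := Z.eqb (fst s) (fst t) && Z.eqb (snd s) (snd t).

Lemma slot_eqb_spec s t : slot_eqb s t = true <-> s = t.
Proof.
  destruct s, t; unfold slot_eqb; cbn; rewrite andb_true_iff, !Z.eqb_eq.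
  split; [intros [-> ->] | intro E; injection E]; auto.
Qed.

(* [kap] identifies K with the square [-1,1]^2 cut into eight triangles by its
   axes and diagonals, the slot (a, b) being the point (a, b). *)
Record square_model (K : list vertex -> Prop) (kap : slot -> vertex) : Prop := {
  sm_inj : forall s s', In s square_slots -> In s' square_slots -> kap s = kap s' -> s = s';
  sm_type : forall s, In s square_slots -> fst (kap s) = slot_type s;
  sm_triangle : forall j, In j square_triangles -> K (map kap (tri_slots j));
  sm_simplex : forall t, K t -> exists j, In j square_triangles /\ incl t (map kap (tri_slots j))
}.

(* The face x_k = e of the cube [-1, 1]^3, in coordinates given by a slot. *)
Definition square_pt (k : nat) (e : Z) (s : slot) : Z3 :=
  let '(a, b) := s in match k with 0%nat => (e, a, b) | 1%nat => (a, e, b) | _ => (a, b, e) end.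

Definition triangle_coset_check (k : nat) (e : Z) : bool :=
  forallb (fun j => existsb (fun u => forallb (fun s =>
      Z3_eqb (act u (base_pt (slot_type s))) (square_pt k e s)) (tri_slots j))
    nf_words) square_triangles.

Definition halfspace_check (k : nat) (e : Z) : bool :=
  forallb (fun u => forallb (fun i =>
      if 0 <? e * coord k (act u (base_pt i)) then existsb (fun s =>
        gen_eqb (slot_type s) i && Z3_eqb (square_pt k e s) (act u (base_pt i))) square_slots
      else true) gens) nf_words.

Definition coset_triangle_check (k : nat) (e : Z) : bool :=
  forallb (fun u => existsb (fun j => forallb (fun s =>
      if Z3_eqb (square_pt k e s) (act u (base_pt (slot_type s)))
      then existsb (slot_eqb s) (tri_slots j) else true) square_slots) square_triangles) nf_words.

Lemma square_checks_true k e :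
  In k [0; 1; 2]%nat -> In e [1; -1] ->
  triangle_coset_check k e = true /\ halfspace_check k e = true /\
  coset_triangle_check k e = true.
Proof.
  assert (C : forallb (fun k => forallb (fun e =>
    triangle_coset_check k e && halfspace_check k e && coset_triangle_check k e)
    [1; -1]) [0; 1; 2]%nat = true) by (vm_compute; reflexivity).
  intros Hk He; rewrite forallb_forall in C; specialize (C k Hk).
  rewrite forallb_forall in C; specialize (C e He).
  apply andb_prop in C; destruct C as [C C3]; apply andb_prop in C; tauto.
Qed.

Section SquareFace.
Variables (k : nat) (e : Z).
Hypotheses (Hk : In k [0; 1; 2]%nat) (He : In e [1; -1]).

Definition square_vertex (s : slot) : vertex := pt_vertex (slot_type s) (square_pt k e s).

Lemma square_triangle_coset j :
  In j square_triangles -> exists g, forall s, In s (tri_slots j) ->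
    act g (base_pt (slot_type s)) = square_pt k e s.
Proof.
  intro Hj; destruct (square_checks_true k e Hk He) as [C _]; unfold triangle_coset_check in C.
  rewrite forallb_forall in C; specialize (C j Hj).
  apply existsb_exists in C; destruct C as (u & _ & C).
  exists u; intros s Hs; rewrite forallb_forall in C; apply Z3_eqb_spec, C, Hs.
Qed.

Lemma halfspace_square_pt g i :
  0 < e * coord k (act g (base_pt i)) ->
  exists s, In s square_slots /\ slot_type s = i /\ square_pt k e s = act g (base_pt i).
Proof.
  destruct (act_nf_words g) as (u & Hu & Eu); rewrite !Eu; intro Hpos.
  destruct (square_checks_true k e Hk He) as (_ & C & _); unfold halfspace_check in C.
  rewrite forallb_forall in C; specialize (C u Hu); clear Hu.
  rewrite forallb_forall in C; specialize (C i (in_gens i)).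
  rewrite (proj2 (Z.ltb_lt _ _) Hpos) in C.
  apply existsb_exists in C; destruct C as (s & Hs & C).
  rewrite andb_true_iff, gen_eqb_spec, Z3_eqb_spec in C.
  exists s; tauto.
Qed.

Lemma coset_square_triangle g :
  exists j, In j square_triangles /\ forall s, In s square_slots ->
    square_pt k e s = act g (base_pt (slot_type s)) -> In s (tri_slots j).
Proof.
  destruct (act_nf_words g) as (u & Hu & Eu).
  destruct (square_checks_true k e Hk He) as (_ & _ & C); unfold coset_triangle_check in C.
  rewrite forallb_forall in C; specialize (C u Hu); clear Hu.
  apply existsb_exists in C; destruct C as (j & Hj & C).
  exists j; split; [exact Hj|]; intros s Hs Eq.
  rewrite forallb_forall in C; specialize (C s Hs).
  rewrite <- Eu, (proj2 (Z3_eqb_spec _ _) Eq), existsb_exists in C.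
  destruct C as (t & Ht & Est); apply slot_eqb_spec in Est; subst t; exact Ht.
Qed.

Lemma coord_square_pt s : coord k (square_pt k e s) = e.
Proof. destruct s; destruct Hk as [<-|[<-|[<-|[]]]]; reflexivity. Qed.

Lemma square_pt_inj s s' : square_pt k e s = square_pt k e s' -> s = s'.
Proof.
  destruct s, s'; destruct Hk as [<-|[<-|[<-|[]]]]; cbn; intro E; injection E; congruence.
Qed.

End SquareFace.

Section FalkHalf.
Variables (k : nat) (e : Z) (r : word) (v0 : vertex).
Hypotheses (Hk : In k [0; 1; 2]%nat) (He : In e [1; -1]).
Hypothesis Hr : forall x, act r x = flip k x.

Definition in_halfspace (v : vertex) : Prop :=
  exists g, v = pt_vertex (fst v) (act g (base_pt (fst v))) /\
    0 < e * coord k (act g (base_pt (fst v))).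

Hypothesis Hv0 : in_halfspace v0.

Let reach := clos_refl_trans vertex (adjNF r) v0.

Lemma adjNF_in_halfspace u v : in_halfspace u -> adjNF r u v -> in_halfspace v.
Proof.
  intros (g & Eu & Hu) (_ & Hv & _ & Hnv & _ & _ & w & Hw).
  destruct (isVertex_W v Hv) as [g' Ev]; exists g'; split; [exact Ev|].
  assert (Hwu : act w (base_pt (fst u)) = act g (base_pt (fst u)))
    by (specialize (Hw u (or_introl eq_refl)); rewrite Eu in Hw; exact Hw).
  assert (Hwv : act w (base_pt (fst v)) = act g' (base_pt (fst v)))
    by (specialize (Hw v (or_intror (or_introl eq_refl))); rewrite Ev in Hw; exact Hw).
  assert (Hnz : coord k (act g' (base_pt (fst v))) <> 0)
    by (intro E; apply Hnv; rewrite Ev; now apply (fixedV_pt_vertex r k)).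
  pose proof (coord_act_base_pt_mul_nonneg w (fst u) (fst v) k) as Hsign.
  rewrite Hwu, Hwv in Hsign.
  destruct He as [<-|[<-|[]]]; nia.
Qed.

Lemma reach_in_halfspace v : reach v -> in_halfspace v.
Proof.
  intro H; apply clos_rt_rtn1 in H.
  induction H as [|u v Huv _ IH]; [exact Hv0|].
  exact (adjNF_in_halfspace u v IH Huv).
Qed.

Lemma halfspace_square_vertex v :
  in_halfspace v -> exists s, In s square_slots /\ v = square_vertex k e s.
Proof.
  intros (g & Ev & Hpos).
  destruct (halfspace_square_pt k e Hk He g (fst v) Hpos) as (s & Hs & Ht & Eq).
  exists s; split; [exact Hs|]; unfold square_vertex; now rewrite Ht, Eq.
Qed.

Lemma square_vertex_isVertex s : In s square_slots -> isVertex relsW (square_vertex k e s).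
Proof.
  intro Hs; destruct (square_slot_triangle s Hs) as (j & Hj & Hsj & _).
  destruct (square_triangle_coset k e Hk He j Hj) as [g Hg].
  unfold square_vertex; rewrite <- (Hg s Hsj); apply pt_vertex_isVertex.
Qed.

Lemma square_vertex_not_fixed s : In s square_slots -> ~ fixedV r (square_vertex k e s).
Proof.
  intro Hs; destruct (square_slot_triangle s Hs) as (j & Hj & Hsj & _).
  destruct (square_triangle_coset k e Hk He j Hj) as [g Hg].
  unfold square_vertex; rewrite <- (Hg s Hsj), (fixedV_pt_vertex r k) by assumption.
  rewrite Hg, coord_square_pt by assumption; destruct He as [<-|[<-|[]]]; discriminate.
Qed.

Lemma square_triangle_simplexW j :
  In j square_triangles -> simplexW (map (square_vertex k e) (tri_slots j)).
Proof.
  intro Hj; destruct (square_triangle_coset k e Hk He j Hj) as [g Hg].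
  split; [destruct j as [[a b] c]; discriminate|]; split.
  - intros v Hv; apply in_map_iff in Hv; destruct Hv as (s & <- & Hs).
    apply square_vertex_isVertex, (tri_slots_square j); assumption.
  - exists g; intros v Hv; apply in_map_iff in Hv; destruct Hv as (s & <- & Hs).
    cbn; apply Hg, Hs.
Qed.

Lemma square_vertex_adj_centre s :
  In s square_slots ->
  adjNF r (square_vertex k e s) (square_vertex k e (0, 0)) /\
  adjNF r (square_vertex k e (0, 0)) (square_vertex k e s).
Proof.
  intro Hs; destruct (square_slot_triangle s Hs) as (j & Hj & Hsj & Hcj).
  assert (Hc : In (0, 0) square_slots) by (cbn; tauto).
  pose proof (square_triangle_simplexW j Hj) as Hsx.
  split; repeat split;
    try (apply square_vertex_isVertex || apply square_vertex_not_fixed; assumption);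
    (eapply simplex_incl; [exact Hsx | discriminate |]);
    intros v Hv; destruct Hv as [<-|[<-|[]]]; apply in_map; assumption.
Qed.

Lemma square_vertex_reach s : In s square_slots -> reach (square_vertex k e s).
Proof.
  intro Hs; destruct (halfspace_square_vertex v0 Hv0) as (s0 & Hs0 & E0).
  apply rt_trans with (square_vertex k e (0, 0)); apply rt_step.
  - rewrite E0 at 1; apply square_vertex_adj_centre, Hs0.
  - apply square_vertex_adj_centre, Hs.
Qed.

Lemma Ucomp_square_face : square_model (Ucomp r v0) (square_vertex k e).
Proof.
  split.
  - intros s s' Hs Hs' E.
    destruct (square_slot_triangle s' Hs') as (j & Hj & Hsj & _).
    destruct (square_triangle_coset k e Hk He j Hj) as [g Hg].
    unfold square_vertex in E; rewrite <- (Hg s' Hsj) in E.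
    apply pt_vertex_inj in E; destruct E as [_ E]; rewrite Hg in E by exact Hsj.
    now apply (square_pt_inj k e Hk).
  - reflexivity.
  - intros j Hj; split; [now apply square_triangle_simplexW|].
    intros v Hv; apply in_map_iff in Hv; destruct Hv as (s & <- & Hs).
    apply (tri_slots_square j) in Hs; [|exact Hj].
    split; [now apply square_vertex_not_fixed | now apply square_vertex_reach].
  - intros t [(_ & _ & w & Hw) Ht].
    destruct (coset_square_triangle k e Hk He w) as (j & Hj & Hjw).
    exists j; split; [exact Hj|]; intros v Hv.
    destruct (halfspace_square_vertex v (reach_in_halfspace v (proj2 (Ht v Hv)))) as (s & Hs & ->).
    apply in_map, Hjw; [exact Hs|]; symmetry; exact (Hw _ Hv).
Qed.

End FalkHalf.

Lemma Ucomp_square_model r v0 :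
  reflS3 r -> isVertex relsW v0 -> ~ fixedV r v0 -> exists kap, square_model (Ucomp r v0) kap.
Proof.
  intros Hr Hv0 Hnf.
  destruct (reflS3_flip r Hr) as (k & Hk & Hrk).
  destruct (isVertex_W v0 Hv0) as [g0 E0].
  set (c := coord k (act g0 (base_pt (fst v0)))).
  assert (Hc : c <> 0) by (intro Ec; apply Hnf; rewrite E0; now apply (fixedV_pt_vertex r k)).
  exists (square_vertex k (Z.sgn c)).
  apply Ucomp_square_face; try assumption.
  - destruct (Z.lt_trichotomy c 0) as [H|[H|H]];
      [rewrite Z.sgn_neg by exact H | contradiction | rewrite Z.sgn_pos by exact H]; cbn; tauto.
  - exists g0; split; [exact E0|]; fold c.
    rewrite Z.mul_comm, Z.sgn_abs; now apply Z.abs_pos.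
Qed.

Lemma lift_square_model K U kU : isLift K U -> square_model U kU -> exists kap, square_model K kap.
Proof.
  intros (_ & Hsub & HKU & HUK & Hrho) HU.
  assert (Hlift : forall j, In j square_triangles -> exists S, K S /\
    forall s, In s (tri_slots j) -> exists v, In v S /\ rhoV v = kU s).
  { intros j Hj; destruct (HUK _ (sm_triangle _ _ HU j Hj)) as (S & HS & Hiff).
    exists S; split; [exact HS|]; intros s Hs.
    assert (H : In (kU s) (map rhoV S)) by (apply Hiff, in_map, Hs).
    apply in_map_iff in H; destruct H as (v & Ev & Hv); now exists v. }
  assert (Hchoice : forall s, exists v,
    In s square_slots -> exists S, K S /\ In v S /\ rhoV v = kU s).
  { intro s; destruct (classic (In s square_slots)) as [Hs|Hs];
      [|exists (s1, fun _ => False); tauto].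
    destruct (square_slot_triangle s Hs) as (j & Hj & Hsj & _).
    destruct (Hlift j Hj) as (S & HS & HSj); destruct (HSj s Hsj) as (v & Hv & Ev).
    exists v; intros _; now exists S. }
  destruct (functional_choice _ Hchoice) as [kap Hkap]; exists kap.
  assert (Hunique : forall S v s, K S -> In v S -> In s square_slots -> rhoV v = kU s -> v = kap s).
  { intros S v s HS Hv Hs Ev; destruct (Hkap s Hs) as (S' & HS' & Hv' & Ev').
    apply (Hrho v (kap s) S S'); congruence. }
  split.
  - intros s s' Hs Hs' E; apply (sm_inj _ _ HU); [assumption..|].
    destruct (Hkap s Hs) as (_ & _ & _ & Es); destruct (Hkap s' Hs') as (_ & _ & _ & Es').
    now rewrite <- Es, <- Es', E.
  - intros s Hs; destruct (Hkap s Hs) as (_ & _ & _ & Es).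
    rewrite <- (sm_type _ _ HU s Hs), <- Es; reflexivity.
  - intros j Hj; destruct (Hlift j Hj) as (S & HS & HSj).
    apply (Hsub S); [exact HS | destruct j as [[a b] c]; discriminate |].
    intros v Hv; apply in_map_iff in Hv; destruct Hv as (s & <- & Hs).
    destruct (HSj s Hs) as (v & Hv & Ev).
    rewrite <- (Hunique S v s); [assumption..| eapply tri_slots_square; eassumption | exact Ev].
  - intros t Ht; destruct (sm_simplex _ _ HU _ (HKU t Ht)) as (j & Hj & Hincl).
    exists j; split; [exact Hj|]; intros v Hv.
    specialize (Hincl (rhoV v) (in_map _ _ _ Hv)); apply in_map_iff in Hincl.
    destruct Hincl as (s & Es & Hs).
    rewrite (Hunique t v s Ht Hv);
      [apply in_map, Hs | eapply tri_slots_square; eassumption | now symmetry].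
Qed.

(** * Euclidean plane geometry *)

Local Open Scope R_scope.

Lemma eucl_sq p q : eucl p q ^ 2 = (fst p - fst q) ^ 2 + (snd p - snd q) ^ 2.
Proof.
  unfold eucl; rewrite pow2_sqrt; [reflexivity | apply Rplus_le_le_0_compat; apply pow2_ge_0].
Qed.

Lemma eucl_nonneg p q : 0 <= eucl p q.
Proof. apply sqrt_pos. Qed.

Lemma sum_sq_eq0 a b : a ^ 2 + b ^ 2 = 0 -> a = 0 /\ b = 0.
Proof. intro H; split; nra. Qed.

Lemma eucl_eq0 p q : eucl p q = 0 -> p = q.
Proof.
  intro H; pose proof (eucl_sq p q) as E; rewrite H in E.
  destruct p as [a b], q as [c d]; cbn in E.
  destruct (sum_sq_eq0 (a - c) (b - d)) as [E1 E2]; [lra|].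
  f_equal; lra.
Qed.

Lemma eucl_triangle p q r : eucl p r <= eucl p q + eucl q r.
Proof.
  destruct p as [p1 p2], q as [q1 q2], r as [r1 r2]; unfold eucl; cbn [fst snd].
  replace (p1 - r1) with ((p1 - q1) + (q1 - r1)) by ring.
  replace (p2 - r2) with ((p2 - q2) + (q2 - r2)) by ring.
  set (a1 := p1 - q1); set (a2 := p2 - q2); set (b1 := q1 - r1); set (b2 := q2 - r2).
  pose proof (sqrt_cauchy a1 a2 b1 b2) as CS; unfold Rsqr in CS.
  set (A := a1 ^ 2 + a2 ^ 2); set (B := b1 ^ 2 + b2 ^ 2).
  replace (a1 * a1 + a2 * a2) with A in CS by (unfold A; ring).
  replace (b1 * b1 + b2 * b2) with B in CS by (unfold B; ring).
  assert (HA : 0 <= A) by (unfold A; nra); assert (HB : 0 <= B) by (unfold B; nra).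
  pose proof (sqrt_pos A); pose proof (sqrt_pos B).
  rewrite <- (sqrt_pow2 (sqrt A + sqrt B)) by lra; apply sqrt_le_1_alt.
  replace ((sqrt A + sqrt B) ^ 2) with (sqrt A ^ 2 + sqrt B ^ 2 + 2 * (sqrt A * sqrt B)) by ring.
  rewrite !pow2_sqrt by assumption.
  replace ((a1 + b1) ^ 2 + (a2 + b2) ^ 2) with (A + B + 2 * (a1 * b1 + a2 * b2))
    by (unfold A, B; ring).
  lra.
Qed.

Definition lerp (a b : R * R) (t : R) : R * R :=
  (fst a + t * (fst b - fst a), snd a + t * (snd b - snd a)).

Lemma cmp_lerp a b l s : cmp a b l s = lerp a b (s / l).
Proof. reflexivity. Qed.

Lemma lerp_0 a b : lerp a b 0 = a.
Proof. destruct a; unfold lerp; cbn; f_equal; ring. Qed.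

Lemma lerp_1 a b : lerp a b 1 = b.
Proof. destruct b; unfold lerp; cbn; f_equal; ring. Qed.

Lemma eucl_lerp a b s t : eucl (lerp a b s) (lerp a b t) = Rabs (s - t) * eucl a b.
Proof.
  unfold eucl, lerp; cbn [fst snd].
  replace ((fst a + s * (fst b - fst a) - (fst a + t * (fst b - fst a))) ^ 2 +
           (snd a + s * (snd b - snd a) - (snd a + t * (snd b - snd a))) ^ 2)
    with ((s - t) ^ 2 * ((fst a - fst b) ^ 2 + (snd a - snd b) ^ 2)) by ring.
  rewrite sqrt_mult by (apply pow2_ge_0 || (apply Rplus_le_le_0_compat; apply pow2_ge_0)).
  now rewrite <- sqrt_Rsqr_abs, Rsqr_pow2.
Qed.

Lemma eucl_lerp_l a b t : 0 <= t -> eucl a (lerp a b t) = t * eucl a b.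
Proof.
  intro Ht; rewrite <- (lerp_0 a b) at 1; rewrite eucl_lerp, Rabs_left1 by lra; ring.
Qed.

Lemma eucl_lerp_r a b t : t <= 1 -> eucl (lerp a b t) b = (1 - t) * eucl a b.
Proof.
  intro Ht; rewrite <- (lerp_1 a b) at 2; rewrite eucl_lerp, Rabs_left1 by lra; ring.
Qed.

Lemma eucl_triangle_eq x y z l s :
  0 <= s <= l -> eucl x z = s -> eucl z y = l - s -> eucl x y = l -> z = cmp x y l s.
Proof.
  intros Hs H1 H2 H3.
  destruct (Req_dec l 0) as [Hl|Hl].
  - assert (Hs0 : s = 0) by lra; rewrite Hs0 in H1; apply eucl_eq0 in H1; subst x.
    rewrite Hs0, Hl; unfold cmp; destruct z; cbn; f_equal; unfold Rdiv; ring.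
  - pose proof (eucl_sq x z) as E1; pose proof (eucl_sq z y) as E2; pose proof (eucl_sq x y) as E3.
    rewrite H1 in E1; rewrite H2 in E2; rewrite H3 in E3.
    destruct x as [x1 x2], y as [y1 y2], z as [z1 z2]; cbn [fst snd] in *.
    set (u1 := z1 - x1) in *; set (u2 := z2 - x2); set (v1 := y1 - z1); set (v2 := y2 - z2).
    assert (Eu : u1 ^ 2 + u2 ^ 2 = s ^ 2) by (unfold u1, u2; rewrite E1; ring).
    assert (Ev : v1 ^ 2 + v2 ^ 2 = (l - s) ^ 2) by (unfold v1, v2; rewrite E2; ring).
    assert (Euv : (u1 + v1) ^ 2 + (u2 + v2) ^ 2 = l ^ 2)
      by (unfold u1, u2, v1, v2; rewrite E3; ring).
    assert (Dot : u1 * v1 + u2 * v2 = s * (l - s)) by nra.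
    (* |u| + |v| = |u + v| forces (l - s) u = s v *)
    assert (Z0 : ((l - s) * u1 - s * v1) ^ 2 + ((l - s) * u2 - s * v2) ^ 2 = 0).
    { replace (((l - s) * u1 - s * v1) ^ 2 + ((l - s) * u2 - s * v2) ^ 2) with
        ((l - s) ^ 2 * (u1 ^ 2 + u2 ^ 2) + s ^ 2 * (v1 ^ 2 + v2 ^ 2)
         - 2 * s * (l - s) * (u1 * v1 + u2 * v2))
        by ring.
      rewrite Eu, Ev, Dot; ring. }
    destruct (sum_sq_eq0 _ _ Z0) as [A1 A2]; unfold u1, u2, v1, v2 in *.
    unfold cmp; cbn [fst snd]; f_equal; apply (Rmult_eq_reg_l l); try lra;
      field_simplify; lra.
Qed.

Definition comb (c : R * R * R) (x y z : R * R) : R * R :=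
  let '(c1, c2, c3) := c in
  (c1 * fst x + c2 * fst y + c3 * fst z, c1 * snd x + c2 * snd y + c3 * snd z).

Definition coef_sum (c : R * R * R) : R := let '(c1, c2, c3) := c in c1 + c2 + c3.

Lemma eucl_comb_sq c e x y z :
  coef_sum c = 1 -> coef_sum e = 1 ->
  eucl (comb c x y z) (comb e x y z) ^ 2 =
  - (let '(c1, c2, c3) := c in let '(e1, e2, e3) := e in
     (c1 - e1) * (c2 - e2) * eucl x y ^ 2 + (c2 - e2) * (c3 - e3) * eucl y z ^ 2 +
     (c3 - e3) * (c1 - e1) * eucl z x ^ 2).
Proof.
  destruct c as [[c1 c2] c3], e as [[e1 e2] e3]; unfold coef_sum; cbv beta iota; intros Hc He.
  rewrite !eucl_sq; cbn.
  replace c3 with (1 - c1 - c2) by lra; replace e3 with (1 - e1 - e2) by lra; ring.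
Qed.

Lemma eucl_comb_congruent c e x y z x' y' z' :
  coef_sum c = 1 -> coef_sum e = 1 ->
  eucl x y = eucl x' y' -> eucl y z = eucl y' z' -> eucl z x = eucl z' x' ->
  eucl (comb c x y z) (comb e x y z) = eucl (comb c x' y' z') (comb e x' y' z').
Proof.
  intros Hc He Exy Eyz Ezx.
  rewrite <- (sqrt_pow2 (eucl (comb c x y z) _)), <- (sqrt_pow2 (eucl (comb c x' y' z') _))
    by apply eucl_nonneg.
  rewrite !eucl_comb_sq, Exy, Eyz, Ezx by assumption; reflexivity.
Qed.

Lemma lerp_comb_xy x y z t : lerp x y t = comb (1 - t, t, 0) x y z.
Proof. unfold lerp, comb; f_equal; ring. Qed.

Lemma lerp_comb_yz x y z t : lerp y z t = comb (0, 1 - t, t) x y z.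
Proof. unfold lerp, comb; f_equal; ring. Qed.

Lemma lerp_comb_zx x y z t : lerp z x t = comb (t, 0, 1 - t) x y z.
Proof. unfold lerp, comb; f_equal; ring. Qed.

(** * The orthoscheme metric on the subdivided square *)

Ltac destruct_triangle H :=
  cbn in H; repeat (let E := fresh "E" in
    destruct H as [E|H]; [first [injection E as <- <- <- | subst] |]); try contradiction.

(* Barycentric coordinates of p in the triangle (0, b, c) of the square; the
   vectors b and c - b are orthonormal. *)
Definition lam_corner (j : tri) (p : R * R) : R :=
  let '(_, b, c) := j in fst p * (IZR (fst c) - IZR (fst b)) + snd p * (IZR (snd c) - IZR (snd b)).

Definition lam_edge (j : tri) (p : R * R) : R :=
  let '(_, b, _) := j in fst p * IZR (fst b) + snd p * IZR (snd b) - lam_corner j p.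

Definition lam_centre (j : tri) (p : R * R) : R :=
  let '(_, b, _) := j in 1 - (fst p * IZR (fst b) + snd p * IZR (snd b)).

Lemma lam_sum j p : lam_centre j p + lam_edge j p + lam_corner j p = 1.
Proof. destruct j as [[a b] c]; cbn; ring. Qed.

Definition in_tri (j : tri) (p : R * R) : Prop :=
  0 <= lam_centre j p /\ 0 <= lam_edge j p /\ 0 <= lam_corner j p.

Definition in_square (p : R * R) : Prop := -1 <= fst p <= 1 /\ -1 <= snd p <= 1.

Lemma in_square_lerp p q t : in_square p -> in_square q -> 0 <= t <= 1 -> in_square (lerp p q t).
Proof.
  destruct p as [px py], q as [qx qy]; unfold in_square, lerp; cbn; intros [P1 P2] [Q1 Q2] T.
  repeat split; nra.
Qed.

Definition tri_weight (j : tri) (p : R * R) (s : slot) : R :=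
  let '(a, b, c) := j in
  if slot_eqb s a then lam_centre j p else if slot_eqb s b then lam_edge j p
  else if slot_eqb s c then lam_corner j p else 0.

Lemma tri_weight_unique j j' p s :
  In j square_triangles -> In j' square_triangles -> in_tri j p -> in_tri j' p ->
  In s square_slots -> tri_weight j p s = tri_weight j' p s.
Proof.
  intros Hj Hj' T T' Hs; destruct p as [px py]; unfold in_tri in *.
  destruct_triangle Hj; destruct_triangle Hj'; cbn in T, T';
    destruct_triangle Hs; cbn; lra.
Qed.

(* The lines x = 0, y = 0, x = y and x = -y cut the square into the eight
   triangles; a segment on one side of each of them stays in one triangle. *)
Definition cut_lines : list (R * R) := [(1, 0); (0, 1); (1, -1); (1, 1)].

Definition lin (L p : R * R) : R := fst L * fst p + snd L * snd p.

Definition same_side (Ls : list (R * R)) (p q : R * R) : Prop :=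
  forall L, In L Ls -> 0 <= lin L p * lin L q.

Lemma same_sign a b : 0 <= a * b -> (0 <= a /\ 0 <= b) \/ (a <= 0 /\ b <= 0).
Proof.
  intro H; destruct (Rle_or_lt 0 a), (Rle_or_lt 0 b); [left; lra | | | right; lra];
    (destruct (Req_dec a 0); [right; lra|]); (destruct (Req_dec b 0); [right; lra|]); exfalso; nra.
Qed.

Lemma same_side_tri p q :
  in_square p -> in_square q -> same_side cut_lines p q ->
  exists j, In j square_triangles /\ in_tri j p /\ in_tri j q.
Proof.
  destruct p as [px py], q as [qx qy]; unfold in_square; cbn [fst snd]; intros Hp Hq H.
  assert (P1 := H (1, 0) ltac:(cbn; tauto)); assert (P2 := H (0, 1) ltac:(cbn; tauto)).
  assert (P3 := H (1, -1) ltac:(cbn; tauto)); assert (P4 := H (1, 1) ltac:(cbn; tauto)).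
  unfold lin in P1, P2, P3, P4; cbn [fst snd] in P1, P2, P3, P4.
  apply same_sign in P1, P2, P3, P4; unfold in_tri.
  destruct P1 as [P1|P1], P2 as [P2|P2].
  - destruct P3 as [P3|P3];
      [exists ((0, 0), (1, 0), (1, 1))%Z | exists ((0, 0), (0, 1), (1, 1))%Z];
      (split; [cbn; tauto|]); cbn; repeat split; lra.
  - destruct P4 as [P4|P4];
      [exists ((0, 0), (1, 0), (1, -1))%Z | exists ((0, 0), (0, -1), (1, -1))%Z];
      (split; [cbn; tauto|]); cbn; repeat split; lra.
  - destruct P4 as [P4|P4];
      [exists ((0, 0), (0, 1), (-1, 1))%Z | exists ((0, 0), (-1, 0), (-1, 1))%Z];
      (split; [cbn; tauto|]); cbn; repeat split; lra.
  - destruct P3 as [P3|P3];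
      [exists ((0, 0), (0, -1), (-1, -1))%Z | exists ((0, 0), (-1, 0), (-1, -1))%Z];
      (split; [cbn; tauto|]); cbn; repeat split; lra.
Qed.

Lemma in_square_tri p : in_square p -> exists j, In j square_triangles /\ in_tri j p.
Proof.
  intro H; destruct (same_side_tri p p H H) as (j & Hj & Hp & _); [|now exists j].
  intros L _; apply Rle_0_sqr.
Qed.

Lemma div_unit_interval a b : 0 <= a <= b -> 0 < b -> 0 <= a / b <= 1.
Proof.
  intros Hab Hb; split; [apply Rmult_le_pos; [lra | left; apply Rinv_0_lt_compat, Hb]|].
  apply (Rmult_le_reg_r b); [exact Hb|]; unfold Rdiv; rewrite Rmult_assoc, Rinv_l; lra.
Qed.

Section SegmentSubdivision.
Variable P : R * R -> R * R -> Prop.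
Hypothesis P_tri : forall p q, in_square p -> in_square q ->
  (exists j, In j square_triangles /\ in_tri j p /\ in_tri j q) -> P p q.
Hypothesis P_concat : forall p q t, in_square p -> in_square q -> 0 <= t <= 1 ->
  P p (lerp p q t) -> P (lerp p q t) q -> P p q.

Lemma subdivide_along L Ls :
  (forall p q, in_square p -> in_square q -> same_side (L :: Ls) p q -> P p q) ->
  forall p q, in_square p -> in_square q -> same_side Ls p q -> P p q.
Proof.
  intros H p q Hp Hq Hpq.
  destruct (Rle_or_lt 0 (lin L p * lin L q)) as [Hl|Hl].
  { apply H; [assumption..|]; intros L' [<-|HL']; [exact Hl | exact (Hpq L' HL')]. }
  (* cut the segment where it crosses the line lin L = 0 *)
  set (t := lin L p / (lin L p - lin L q)).
  assert (Hd : lin L p - lin L q <> 0) by (intro E; assert (lin L p = lin L q) by lra; nra).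
  assert (Ht : 0 <= t <= 1).
  { unfold t; destruct (Rle_or_lt 0 (lin L p)).
    - assert (lin L q < 0) by nra; assert (0 < lin L p) by nra.
      apply div_unit_interval; lra.
    - assert (0 < lin L q) by nra.
      replace (lin L p / (lin L p - lin L q)) with (- lin L p / (lin L q - lin L p))
        by (field; lra).
      apply div_unit_interval; lra. }
  set (m := lerp p q t).
  assert (Hlin : forall L', lin L' m = (1 - t) * lin L' p + t * lin L' q)
    by (intro; unfold lin, m, lerp; cbn; ring).
  assert (Hm0 : lin L m = 0) by (rewrite Hlin; unfold t; field; exact Hd).
  assert (Hm : in_square m) by (apply in_square_lerp; assumption).
  apply (P_concat p q t Hp Hq Ht); fold m; apply H; try assumption;
    intros L' [<-|HL']; try (rewrite Hm0; lra); rewrite Hlin; specialize (Hpq L' HL');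
    pose proof (Rle_0_sqr (lin L' p)); pose proof (Rle_0_sqr (lin L' q)); unfold Rsqr in *; nra.
Qed.

Lemma subdivide_square p q : in_square p -> in_square q -> P p q.
Proof.
  intros Hp Hq.
  apply (subdivide_along (1, 0) []); [|assumption..| intros L []].
  apply (subdivide_along (0, 1) [(1, 0)]).
  apply (subdivide_along (1, -1) [(0, 1); (1, 0)]).
  apply (subdivide_along (1, 1) [(1, -1); (0, 1); (1, 0)]).
  intros p' q' Hp' Hq' Hs; apply P_tri, same_side_tri; try assumption.
  intros L HL; apply Hs; cbn in HL |- *; tauto.
Qed.

End SegmentSubdivision.

Definition lsum {A} (f : A -> R) (l : list A) : R := fold_right (fun a acc => f a + acc) 0 l.

Lemma sumL_lsum s f : sumL s f = lsum f s.
Proof. induction s as [|v s IH]; cbn; [reflexivity | now rewrite IH]. Qed.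

Lemma lsum_perm {A} (f : A -> R) l1 l2 : Permutation l1 l2 -> lsum f l1 = lsum f l2.
Proof. induction 1; unfold lsum in *; cbn; lra. Qed.

Lemma lsum_cons {A} (f : A -> R) a l : lsum f (a :: l) = f a + lsum f l.
Proof. reflexivity. Qed.

Lemma lsum_zero {A} (f : A -> R) l : (forall a, In a l -> f a = 0) -> lsum f l = 0.
Proof.
  induction l as [|a l IH]; intro H; [reflexivity|].
  rewrite lsum_cons, H, IH; [ring | intros b Hb; apply H; now right | now left].
Qed.

Lemma lsum_filter {A} (f : A -> R) (P : A -> bool) l :
  lsum f l = lsum f (filter P l) + lsum f (filter (fun a => negb (P a)) l).
Proof.
  induction l as [|a l IH]; [cbn; ring|]; cbn [filter].
  destruct (P a); cbn [negb]; rewrite !lsum_cons, IH; ring.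
Qed.

Lemma lsum_incl {A} (f : A -> R) s t :
  NoDup s -> NoDup t -> incl s t -> (forall a, In a t -> f a <> 0 -> In a s) ->
  lsum f s = lsum f t.
Proof.
  intros Hs Ht Hst Hf.
  set (P := fun a => if excluded_middle_informative (In a s) then true else false).
  rewrite (lsum_filter f P t), (lsum_zero f (filter (fun a => negb (P a)) t)), Rplus_0_r.
  - apply lsum_perm, NoDup_Permutation; [exact Hs | now apply NoDup_filter|].
    intro a; rewrite filter_In; unfold P.
    destruct (excluded_middle_informative (In a s)) as [H|H]; split; intro H'.
    + split; [apply Hst, H' | reflexivity].
    + exact H.
    + contradiction.
    + destruct H' as [_ E]; discriminate E.
  - intros a Ha; rewrite filter_In in Ha; unfold P in Ha.
    destruct (excluded_middle_informative (In a s)) as [|Hn]; [cbn in Ha; intuition discriminate|].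
    destruct (Req_dec (f a) 0) as [|Hfa]; [assumption | contradiction (Hn (Hf a (proj1 Ha) Hfa))].
Qed.

Lemma NoDup_square_slots : NoDup square_slots.
Proof. repeat constructor; cbn; intuition discriminate. Qed.

Lemma NoDup_tri_slots j : In j square_triangles -> NoDup (tri_slots j).
Proof. intro Hj; destruct_triangle Hj; repeat constructor; cbn; intuition discriminate. Qed.

Definition vdec (u v : vertex) : {u = v} + {u <> v} := excluded_middle_informative (u = v).

Definition in_trib (j : tri) (p : R * R) : bool :=
  if Rle_dec 0 (lam_centre j p) then if Rle_dec 0 (lam_edge j p) then
    if Rle_dec 0 (lam_corner j p) then true else false else false else false.

Lemma in_trib_spec j p : in_trib j p = true <-> in_tri j p.
Proof.
  unfold in_trib, in_tri.
  destruct (Rle_dec 0 (lam_centre j p)), (Rle_dec 0 (lam_edge j p)), (Rle_dec 0 (lam_corner j p));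
    split; intuition discriminate.
Qed.

Section SquareComplex.
Variables (K : list vertex -> Prop) (kap : slot -> vertex).
Hypothesis HK : square_model K kap.

(* Plane coordinates of a point of |K|: vertex kap s sits at the point s. *)
Definition plane (x : pt) : R * R :=
  (lsum (fun s => x (kap s) * IZR (fst s)) square_slots,
   lsum (fun s => x (kap s) * IZR (snd s)) square_slots).

Definition tri_point (j : tri) (p : R * R) : pt :=
  let '(a, b, c) := j in fun v =>
    if vdec v (kap a) then lam_centre j p else if vdec v (kap b) then lam_edge j p
    else if vdec v (kap c) then lam_corner j p else 0.

Definition chart (p : R * R) : pt :=
  match find (fun j => in_trib j p) square_triangles with
  | Some j => tri_point j p
  | None => fun _ => 0
  end.

Lemma tri_vertices_distinct a b c :
  In (a, b, c) square_triangles ->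
  kap a <> kap b /\ kap a <> kap c /\ kap b <> kap c /\
  fst (kap a) = s1 /\ fst (kap b) = s2 /\ fst (kap c) = s3.
Proof.
  intro Hj.
  assert (Hin : forall s, In s [a; b; c] -> In s square_slots)
    by exact (fun s => tri_slots_square _ s Hj).
  rewrite !(sm_type _ _ HK) by (apply Hin; cbn; tauto).
  assert (D : a <> b /\ a <> c /\ b <> c /\
             slot_type a = s1 /\ slot_type b = s2 /\ slot_type c = s3)
    by (clear -Hj; destruct_triangle Hj; repeat split; try discriminate; reflexivity).
  destruct D as (Dab & Dac & Dbc & T).
  repeat split; try apply T; intro E; apply (sm_inj _ _ HK) in E; try contradiction;
    apply Hin; cbn; tauto.
Qed.

Lemma NoDup_tri_vertices j : In j square_triangles -> NoDup (map kap (tri_slots j)).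
Proof.
  intro Hj; destruct j as [[a b] c].
  destruct (tri_vertices_distinct a b c Hj) as (D1 & D2 & D3 & _).
  repeat constructor; cbn; intuition.
Qed.

Lemma tri_point_at a b c p :
  In (a, b, c) square_triangles ->
  tri_point (a, b, c) p (kap a) = lam_centre (a, b, c) p /\
  tri_point (a, b, c) p (kap b) = lam_edge (a, b, c) p /\
  tri_point (a, b, c) p (kap c) = lam_corner (a, b, c) p /\
  (forall v, ~ In v (map kap (tri_slots (a, b, c))) -> tri_point (a, b, c) p v = 0).
Proof.
  intro Hj; destruct (tri_vertices_distinct a b c Hj) as (D1 & D2 & D3 & _).
  unfold tri_point; repeat split.
  - destruct (vdec (kap a) (kap a)); congruence.
  - destruct (vdec (kap b) (kap a)); [congruence|]; destruct (vdec (kap b) (kap b)); congruence.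
  - destruct (vdec (kap c) (kap a)); [congruence|]; destruct (vdec (kap c) (kap b)); [congruence|].
    destruct (vdec (kap c) (kap c)); congruence.
  - intros v Hv; cbn in Hv.
    destruct (vdec v (kap a)); [subst; tauto|]; destruct (vdec v (kap b)); [subst; tauto|].
    destruct (vdec v (kap c)); [subst; tauto | reflexivity].
Qed.

Lemma tri_point_support j p v :
  In j square_triangles -> tri_point j p v <> 0 -> In v (map kap (tri_slots j)).
Proof.
  intros Hj H; destruct j as [[a b] c].
  destruct (classic (In v (map kap (tri_slots (a, b, c))))) as [I|I]; [exact I|].
  exfalso; apply H, (tri_point_at a b c p Hj), I.
Qed.

Lemma tri_point_inSimplex j p :
  In j square_triangles -> in_tri j p -> inSimplex (map kap (tri_slots j)) (tri_point j p).
Proof.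
  intros Hj (T1 & T2 & T3); split; [|split].
  - intros v Hv; exact (tri_point_support j p v Hj Hv).
  - destruct j as [[a b] c]; intro v; unfold tri_point.
    destruct (vdec v (kap a)); [assumption|]; destruct (vdec v (kap b)); [assumption|].
    destruct (vdec v (kap c)); [assumption | lra].
  - destruct j as [[a b] c]; destruct (tri_point_at a b c p Hj) as (V1 & V2 & V3 & _).
    cbn [map tri_slots sumL]; rewrite V1, V2, V3; pose proof (lam_sum (a, b, c) p); lra.
Qed.

Lemma isPt_tri_point j p : In j square_triangles -> in_tri j p -> isPt K (tri_point j p).
Proof.
  intros Hj T; exists (map kap (tri_slots j)); split; [now apply (sm_triangle _ _ HK)|].
  split; [now apply NoDup_tri_vertices | now apply tri_point_inSimplex].
Qed.

Lemma plane_in_tri j x :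
  In j square_triangles -> (forall v, x v <> 0 -> In v (map kap (tri_slots j))) ->
  plane x = (lsum (fun s => x (kap s) * IZR (fst s)) (tri_slots j),
             lsum (fun s => x (kap s) * IZR (snd s)) (tri_slots j)).
Proof.
  intros Hj Hx.
  assert (Hz : forall s, In s square_slots -> x (kap s) <> 0 -> In s (tri_slots j)).
  { intros s Hs Hxs; apply Hx, in_map_iff in Hxs; destruct Hxs as (t & Et & Ht).
    rewrite <- (sm_inj _ _ HK t s);
      [exact Ht | exact (tri_slots_square j t Hj Ht) | exact Hs | exact Et]. }
  unfold plane; f_equal; symmetry;
    (apply lsum_incl;
     [ now apply NoDup_tri_slots | exact NoDup_square_slots | intros s; now apply tri_slots_square
     | intros s Hs Hf; apply Hz; [exact Hs|]; intro E; apply Hf; rewrite E; ring ]).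
Qed.

Lemma image_in_tri a b c s x :
  In (a, b, c) square_triangles -> NoDup s -> incl s (map kap (tri_slots (a, b, c))) ->
  (forall v, x v <> 0 -> In v s) -> image s x = (x (kap b) + x (kap c), x (kap c)).
Proof.
  intros Hj Hs Hincl Hx; destruct (tri_vertices_distinct a b c Hj) as (_ & _ & _ & T1 & T2 & T3).
  unfold image; rewrite !sumL_lsum.
  rewrite !(lsum_incl _ s (map kap (tri_slots (a, b, c)))); try assumption;
    try (apply NoDup_tri_vertices; assumption);
    try (intros v _ Hv; apply Hx; intro E; apply Hv; rewrite E; ring).
  cbn [lsum fold_right tri_slots map]; unfold Defs.pos; rewrite T1, T2, T3; cbn; f_equal; ring.
Qed.

Lemma pieceLen_eucl x y d : pieceLen K x y d -> d = eucl (plane x) (plane y).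
Proof.
  intros (s & Ks & Nd & Sx & Sy & ->).
  destruct (sm_simplex _ _ HK s Ks) as ([[a b] c] & Hj & Hincl).
  assert (Hsx : forall v, x v <> 0 -> In v (map kap (tri_slots (a, b, c))))
    by (intros v Hv; apply Hincl, Sx, Hv).
  assert (Hsy : forall v, y v <> 0 -> In v (map kap (tri_slots (a, b, c))))
    by (intros v Hv; apply Hincl, Sy, Hv).
  rewrite (image_in_tri a b c s x), (image_in_tri a b c s y)
    by (apply Sx || apply Sy || assumption).
  rewrite (plane_in_tri _ x Hj Hsx), (plane_in_tri _ y Hj Hsy).
  unfold eucl; f_equal; cbn; clear -Hj; destruct_triangle Hj; cbn; ring.
Qed.

Lemma plane_tri_point j p : In j square_triangles -> plane (tri_point j p) = p.
Proof.
  intro Hj.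
  rewrite (plane_in_tri j) by (assumption || (intros v Hv; now apply (tri_point_support j p))).
  destruct j as [[a b] c]; destruct (tri_point_at a b c p Hj) as (V1 & V2 & V3 & _).
  cbn [lsum fold_right tri_slots]; rewrite V1, V2, V3.
  clear -Hj; destruct p as [px py]; destruct_triangle Hj; cbn; f_equal; ring.
Qed.

Lemma isPt_in_tri x :
  isPt K x -> exists j, In j square_triangles /\
    (forall v, x v <> 0 -> In v (map kap (tri_slots j))) /\ (forall v, 0 <= x v) /\
    sumL (map kap (tri_slots j)) x = 1.
Proof.
  intros (s & Ks & Nd & Sup & Nn & Sum).
  destruct (sm_simplex _ _ HK s Ks) as (j & Hj & Hincl).
  exists j; split; [exact Hj|]; split; [intros v Hv; apply Hincl, Sup, Hv|]; split; [exact Nn|].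
  rewrite <- Sum, !sumL_lsum; symmetry; apply lsum_incl; try assumption.
  - now apply NoDup_tri_vertices.
  - intros v _ Hv; apply Sup, Hv.
Qed.

Lemma lam_plane a b c x :
  In (a, b, c) square_triangles -> (forall v, x v <> 0 -> In v (map kap (tri_slots (a, b, c)))) ->
  sumL (map kap (tri_slots (a, b, c))) x = 1 ->
  lam_centre (a, b, c) (plane x) = x (kap a) /\ lam_edge (a, b, c) (plane x) = x (kap b) /\
  lam_corner (a, b, c) (plane x) = x (kap c).
Proof.
  intros Hj Hs Hsum; rewrite (plane_in_tri _ x Hj Hs).
  cbn [sumL map tri_slots] in Hsum; cbn [lsum fold_right tri_slots].
  clear -Hj Hsum; destruct_triangle Hj; cbn; repeat split; lra.
Qed.

Lemma tri_point_plane j x :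
  In j square_triangles -> (forall v, x v <> 0 -> In v (map kap (tri_slots j))) ->
  (forall v, 0 <= x v) -> sumL (map kap (tri_slots j)) x = 1 ->
  x = tri_point j (plane x) /\ in_tri j (plane x).
Proof.
  intros Hj Hs Hn Hsum; destruct j as [[a b] c].
  destruct (lam_plane a b c x Hj Hs Hsum) as (L1 & L2 & L3).
  destruct (tri_point_at a b c (plane x) Hj) as (V1 & V2 & V3 & V4); split.
  - apply functional_extensionality; intro v.
    destruct (classic (In v (map kap (tri_slots (a, b, c))))) as [I|I].
    + destruct I as [<-|[<-|[<-|[]]]]; congruence.
    + rewrite V4 by exact I.
      destruct (Req_dec (x v) 0) as [|Hv]; [assumption | contradiction (I (Hs v Hv))].
  - unfold in_tri; rewrite L1, L2, L3; auto.
Qed.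

Lemma tri_point_kap j p s :
  In j square_triangles -> In s square_slots -> tri_point j p (kap s) = tri_weight j p s.
Proof.
  intros Hj Hs; destruct j as [[a b] c].
  destruct (tri_point_at a b c p Hj) as (V1 & V2 & V3 & V4); unfold tri_weight.
  destruct (slot_eqb s a) eqn:Ea; [apply slot_eqb_spec in Ea; subst; exact V1|].
  destruct (slot_eqb s b) eqn:Eb; [apply slot_eqb_spec in Eb; subst; exact V2|].
  destruct (slot_eqb s c) eqn:Ec; [apply slot_eqb_spec in Ec; subst; exact V3|].
  apply V4; intro Hin; apply in_map_iff in Hin; destruct Hin as (t & Et & Ht).
  apply (sm_inj _ _ HK) in Et; [|exact (tri_slots_square _ t Hj Ht) | exact Hs]; subst t.
  destruct Ht as [->|[->|[->|[]]]];
    [rewrite (proj2 (slot_eqb_spec s s) eq_refl) in Ea; discriminate Ea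
    |rewrite (proj2 (slot_eqb_spec s s) eq_refl) in Eb; discriminate Eb
    |rewrite (proj2 (slot_eqb_spec s s) eq_refl) in Ec; discriminate Ec].
Qed.

Lemma tri_point_unique j j' p :
  In j square_triangles -> In j' square_triangles -> in_tri j p -> in_tri j' p ->
  tri_point j p = tri_point j' p.
Proof.
  intros Hj Hj' T T'; apply functional_extensionality; intro v.
  destruct (classic (exists s, In s square_slots /\ v = kap s)) as [(s & Hs & ->)|N].
  - rewrite !tri_point_kap by assumption; now apply tri_weight_unique.
  - assert (Hn : forall i, In i square_triangles -> ~ In v (map kap (tri_slots i))).
    { intros i Hi I; apply N; apply in_map_iff in I; destruct I as (s & Es & Is).
      exists s; split; [exact (tri_slots_square i s Hi Is) | now symmetry]. }
    destruct j as [[a b] c], j' as [[a' b'] c'].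
    rewrite (proj2 (proj2 (proj2 (tri_point_at a b c p Hj)))) by (apply Hn, Hj).
    rewrite (proj2 (proj2 (proj2 (tri_point_at a' b' c' p Hj')))) by (apply Hn, Hj'); reflexivity.
Qed.

Lemma chart_tri j p : In j square_triangles -> in_tri j p -> chart p = tri_point j p.
Proof.
  intros Hj T; unfold chart.
  destruct (find (fun j => in_trib j p) square_triangles) as [j'|] eqn:E.
  - apply find_some in E; destruct E as [Hj' T']; apply in_trib_spec in T'.
    now apply tri_point_unique.
  - apply (find_none _ _ E) in Hj; rewrite (proj2 (in_trib_spec j p) T) in Hj; discriminate Hj.
Qed.

Lemma chart_spec p : in_square p -> isPt K (chart p) /\ plane (chart p) = p.
Proof.
  intro H; destruct (in_square_tri p H) as (j & Hj & T); rewrite (chart_tri j p Hj T).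
  split; [now apply isPt_tri_point | now apply plane_tri_point].
Qed.

Lemma chart_plane x : isPt K x -> chart (plane x) = x.
Proof.
  intro H; destruct (isPt_in_tri x H) as (j & Hj & S & N & Sum).
  destruct (tri_point_plane j x Hj S N Sum) as [E T].
  rewrite (chart_tri j (plane x) Hj T); symmetry; exact E.
Qed.

Lemma plane_in_square x : isPt K x -> in_square (plane x).
Proof.
  intro H; destruct (isPt_in_tri x H) as ([[a b] c] & Hj & S & N & Sum).
  rewrite (plane_in_tri _ x Hj S); cbn [sumL map tri_slots] in Sum.
  pose proof (N (kap a)); pose proof (N (kap b)); pose proof (N (kap c)).
  unfold in_square; cbn [lsum fold_right tri_slots fst snd].
  clear -Hj Sum H0 H1 H2; destruct_triangle Hj; cbn; repeat split; lra.
Qed.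

Lemma strLen_app x ps m qs y d1 d2 :
  strLen K x ps m d1 -> strLen K m qs y d2 -> strLen K x (ps ++ m :: qs) y (d1 + d2).
Proof.
  revert x d1; induction ps as [|p ps IH]; intros x d1 H1 H2; cbn in *.
  - now exists d1, d2.
  - destruct H1 as (e1 & e2 & P & S & ->); exists e1, (e2 + d2).
    split; [exact P|]; split; [now apply IH | ring].
Qed.

Lemma strLen_ge ps : forall x y d, strLen K x ps y d -> eucl (plane x) (plane y) <= d.
Proof.
  induction ps as [|p ps IH]; intros x y d H; cbn in H.
  - rewrite (pieceLen_eucl x y d H); lra.
  - destruct H as (d1 & d2 & P & S & ->); rewrite (pieceLen_eucl _ _ _ P).
    pose proof (IH _ _ _ S); pose proof (eucl_triangle (plane x) (plane p) (plane y)); lra.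
Qed.

Lemma tri_piece j p q :
  In j square_triangles -> in_tri j p -> in_tri j q -> pieceLen K (chart p) (chart q) (eucl p q).
Proof.
  intros Hj Tp Tq; rewrite (chart_tri j p Hj Tp), (chart_tri j q Hj Tq).
  exists (map kap (tri_slots j)).
  split; [now apply (sm_triangle _ _ HK)|]; split; [now apply NoDup_tri_vertices|].
  split; [now apply tri_point_inSimplex|]; split; [now apply tri_point_inSimplex|].
  destruct j as [[a b] c].
  assert (Nd : NoDup (map kap (tri_slots (a, b, c)))) by now apply NoDup_tri_vertices.
  rewrite (image_in_tri a b c _ _ Hj Nd (incl_refl _) (fun v => tri_point_support _ p v Hj)).
  rewrite (image_in_tri a b c _ _ Hj Nd (incl_refl _) (fun v => tri_point_support _ q v Hj)).
  destruct (tri_point_at a b c p Hj) as (_ & V2 & V3 & _).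
  destruct (tri_point_at a b c q Hj) as (_ & W2 & W3 & _).
  rewrite V2, V3, W2, W3; unfold eucl; f_equal.
  clear -Hj; destruct p as [px py], q as [qx qy]; destruct_triangle Hj; cbn; ring.
Qed.

Lemma segment_string p q :
  in_square p -> in_square q ->
  exists ps, Forall (isPt K) ps /\ strLen K (chart p) ps (chart q) (eucl p q).
Proof.
  apply (subdivide_square (fun p q =>
    exists ps, Forall (isPt K) ps /\ strLen K (chart p) ps (chart q) (eucl p q))).
  - intros p' q' _ _ (j & Hj & Tp & Tq); exists [].
    split; [constructor | exact (tri_piece j p' q' Hj Tp Tq)].
  - intros p' q' t Hp Hq Ht (ps1 & F1 & S1) (ps2 & F2 & S2).
    exists (ps1 ++ chart (lerp p' q' t) :: ps2); split.
    + apply Forall_app; split; [exact F1|]; constructor; [|exact F2].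
      apply chart_spec, in_square_lerp; assumption.
    + replace (eucl p' q') with (eucl p' (lerp p' q' t) + eucl (lerp p' q' t) q')
        by (rewrite eucl_lerp_l, eucl_lerp_r by lra; ring).
      now apply strLen_app.
Qed.

Lemma dist_plane x y : isPt K x -> isPt K y -> Defs.dist K x y = Finite (eucl (plane x) (plane y)).
Proof.
  intros Hx Hy; apply is_glb_Rbar_unique; split.
  - intros d (ps & _ & H); exact (strLen_ge ps x y d H).
  - intros b Hb; apply Hb.
    destruct (segment_string (plane x) (plane y)) as (ps & F & S); try (now apply plane_in_square).
    rewrite !chart_plane in S by assumption; now exists ps.
Qed.

Lemma geodesic_plane g a b l :
  geodesic K g a b l ->
  isPt K a /\ isPt K b /\ eucl (plane a) (plane b) = l /\
  forall s, 0 <= s <= l -> isPt K (g s) /\ plane (g s) = cmp (plane a) (plane b) l s.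
Proof.
  intros (Hl & G0 & Gl & H).
  assert (Ha : isPt K a) by (rewrite <- G0; apply (H 0 0); lra).
  assert (Hb : isPt K b) by (rewrite <- Gl; apply (H l l); lra).
  assert (Hd : forall s t, 0 <= s <= l -> 0 <= t <= l ->
             eucl (plane (g s)) (plane (g t)) = Rabs (s - t)).
  { intros s t Hs Ht; destruct (H s t Hs Ht) as [Ps D]; destruct (H t t Ht Ht) as [Pt _].
    rewrite dist_plane in D by assumption; now injection D. }
  assert (Eab : eucl (plane a) (plane b) = l)
    by (rewrite <- G0, <- Gl, Hd, Rabs_left1 by lra; ring).
  split; [exact Ha|]; split; [exact Hb|]; split; [exact Eab|].
  intros s Hs; split; [apply (H s s Hs Hs)|].
  apply eucl_triangle_eq; [exact Hs | | | exact Eab].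
  - rewrite <- G0, Hd, Rabs_left1 by lra; ring.
  - rewrite <- Gl, Hd, Rabs_left1 by lra; ring.
Qed.

Lemma square_geodesic x y : isPt K x -> isPt K y -> exists g l, geodesic K g x y l.
Proof.
  intros Hx Hy; set (l := eucl (plane x) (plane y)).
  assert (Hsq : forall s, 0 <= s <= l -> in_square (lerp (plane x) (plane y) (s / l))).
  { intros s Hs; apply in_square_lerp; try (now apply plane_in_square).
    destruct (Req_dec l 0) as [E|E]; [rewrite E; unfold Rdiv; rewrite Rinv_0; lra|].
    pose proof (eucl_nonneg (plane x) (plane y)) as Hl; fold l in Hl.
    apply div_unit_interval; lra. }
  exists (fun s => chart (lerp (plane x) (plane y) (s / l))), l.
  split; [apply eucl_nonneg|]; split; [|split].
  - unfold Rdiv; rewrite Rmult_0_l, lerp_0; now apply chart_plane.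
  - destruct (Req_dec l 0) as [E|E].
    + rewrite E; unfold Rdiv; rewrite Rmult_0_l, lerp_0, (eucl_eq0 _ _ E); now apply chart_plane.
    + unfold Rdiv; rewrite Rinv_r, lerp_1 by exact E; now apply chart_plane.
  - intros s t Hs Ht.
    destruct (chart_spec _ (Hsq s Hs)) as [Ps Fs]; destruct (chart_spec _ (Hsq t Ht)) as [Pt Ft].
    split; [exact Ps|]; rewrite dist_plane, Fs, Ft, eucl_lerp by assumption; fold l; f_equal.
    destruct (Req_dec l 0) as [E|E].
    + assert (s = 0) by lra; assert (t = 0) by lra; subst s t; rewrite E, Rminus_0_r, Rabs_R0; ring.
    + rewrite <- (Rabs_pos_eq l (eucl_nonneg _ _)) at 3.
      rewrite <- Rabs_mult; f_equal; field; exact E.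
Qed.

Theorem square_model_CAT0 : CAT0 K.
Proof.
  split; [exact square_geodesic|].
  intros x y z g1 g2 g3 l1 l2 l3 xb yb zb H1 H2 H3 E1 E2 E3 sides e1 e2 s t I1 I2.
  destruct (geodesic_plane _ _ _ _ H1) as (_ & _ & L1 & F1).
  destruct (geodesic_plane _ _ _ _ H2) as (_ & _ & L2 & F2).
  destruct (geodesic_plane _ _ _ _ H3) as (_ & _ & L3 & F3).
  (* each side of both triangles is parametrised by the same affine coefficients *)
  assert (Hside : forall e, In e sides -> let '(h, m, a, b) := e in
    exists cf : R -> R * R * R, forall s, 0 <= s <= m ->
      isPt K (h s) /\ plane (h s) = comb (cf s) (plane x) (plane y) (plane z) /\
      coef_sum (cf s) = 1 /\ cmp a b m s = comb (cf s) xb yb zb).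
  { intros e He; destruct He as [<-|[<-|[<-|[]]]].
    - exists (fun s => (1 - s / l1, s / l1, 0)); intros s' Hs'; destruct (F1 s' Hs') as [P F].
      rewrite F, !cmp_lerp, (lerp_comb_xy _ _ (plane z)), (lerp_comb_xy _ _ zb).
      repeat split; [exact P | cbn; ring].
    - exists (fun s => (0, 1 - s / l2, s / l2)); intros s' Hs'; destruct (F2 s' Hs') as [P F].
      rewrite F, !cmp_lerp, (lerp_comb_yz (plane x)), (lerp_comb_yz xb).
      repeat split; [exact P | cbn; ring].
    - exists (fun s => (s / l3, 0, 1 - s / l3)); intros s' Hs'; destruct (F3 s' Hs') as [P F].
      rewrite F, !cmp_lerp, (lerp_comb_zx _ (plane y)), (lerp_comb_zx _ yb).
      repeat split; [exact P | cbn; ring]. }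
  pose proof (Hside e1 I1) as S1; pose proof (Hside e2 I2) as S2.
  destruct e1 as [[[h1 m1] a1] b1], e2 as [[[h2 m2] a2] b2]; intros Hs Ht.
  destruct S1 as [c1 S1]; destruct S2 as [c2 S2].
  destruct (S1 s Hs) as (P1 & Q1 & C1 & R1); destruct (S2 t Ht) as (P2 & Q2 & C2 & R2).
  rewrite dist_plane, Q1, Q2, R1, R2 by assumption; cbn.
  rewrite (eucl_comb_congruent _ _ _ _ _ xb yb zb C1 C2) by congruence; apply Rle_refl.
Qed.

End SquareComplex.

Theorem mainTheorem13 :
  forall (r : word) (v0 : vertex) (K : list vertex -> Prop),
    reflS3 r -> isVertex relsW v0 -> ~ fixedV r v0 ->
    isLift K (Ucomp r v0) ->
    CAT0 K.
Proof.
  intros r v0 K Hr Hv0 Hnf HK.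
  destruct (Ucomp_square_model r v0 Hr Hv0 Hnf) as [kU HU].
  destruct (lift_square_model K _ kU HK HU) as [kap Hkap].
  exact (square_model_CAT0 K kap Hkap).
Qed.
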